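(* Consider the setting described in the context. Suppose that: (i) $\frac{1}{n} \sum_{i=1}^{n} \lVert Q^*(x^i)\rVert^4 \xrightarrow{p} \mathbb{E}[\lVert Q^*(X)\rVert^4]$ and $\frac{1}{n} \sum_{i=1}^{n} \lVert [Q^*(x^i)]^{-1}\rVert^2 \xrightarrow{p} \mathbb{E}[\lVert [Q^*(X)]^{-1}\rVert^2]$, where these expectations are finite; (ii) $\frac{1}{n} \sum_{i=1}^{n} \lVert\varepsilon^i\rVert^4 \xrightarrow{p} \mathbb{E}[\lVert\varepsilon\rVert^4] < +\infty$; (iii) $\hat{f}_n(x) \xrightarrow{p} f^*(x)$ and $\hat{Q}_n(x) \xrightarrow{p} Q^*(x)$ for $P_X$-a.e. $x \in \mathcal{X}$, and $\frac{1}{n} \sum_{i=1}^{n} \lVert \hat{f}_n(x^i) - f^*(x^i)\rVert^2 \xrightarrow{p} 0$ and $\frac{1}{n} \sum_{i=1}^{n} \lVert [\hat{Q}_n(x^i)]^{-1} - [Q^*(x^i)]^{-1}\rVert^2 \xrightarrow{p} 0$. Then $\frac{1}{n} \sum_{i=1}^{n} \lVert \tilde{\varepsilon}^i_n(x)\rVert \xrightarrow{p} 0$ for $P_X$-a.e. $x \in \mathcal{X}$.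
   Context: Random vectors $Y \in \mathbb{R}^{d_y}$ and covariates $X \in \mathbb{R}^{d_x}$ satisfy $Y = f^*(X) + Q^*(X)\varepsilon$, where $f^*:\mathbb{R}^{d_x}\to\mathbb{R}^{d_y}$, $Q^*:\mathbb{R}^{d_x}\to\mathbb{R}^{d_y\times d_y}$, the zero-mean random error $\varepsilon \in \mathbb{R}^{d_y}$ is independent of $X$, and $Q^*(x) \succ 0$ (positive definite) for $P_X$-a.e. $x$ in the support $\mathcal{X}$ of $X$ ($P_X$ is the distribution of $X$). Data $\mathcal{D}_n = \{(y^i,x^i)\}_{i=1}^n$ are joint observations of $(Y,X)$, with corresponding error realizations $\varepsilon^i = [Q^*(x^i)]^{-1}(y^i - f^*(x^i))$. Regression estimates $\hat{f}_n$ of $f^*$ and $\hat{Q}_n$ of $Q^*$ are computed from $\mathcal{D}_n$, with $\hat{Q}_n(x) \succ 0$ almost surely for $P_X$-a.e. $x \in \mathcal{X}$. Define empirical residuals $\hat{\varepsilon}^i_n := [\hat{Q}_n(x^i)]^{-1}(y^i - \hat{f}_n(x^i))$ and, for $x \in \mathcal{X}$, the deviation terms $\tilde{\varepsilon}^i_n(x) := (\hat{f}_n(x) + \hat{Q}_n(x)\hat{\varepsilon}^i_n) - (f^*(x) + Q^*(x)\varepsilon^i)$, $i=1,\dots,n$. $\lVert\cdot\rVert$ is the Euclidean norm on vectors and the induced operator norm on matrices. $\xrightarrow{p}$ denotes convergence in probability as $n\to\infty$ with respect to the probability measure generating the data. *)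

From HB Require Import structures.
From mathcomp Require Import all_boot all_order all_algebra.
From mathcomp Require Import all_classical all_reals all_analysis.
Set Implicit Arguments. Unset Strict Implicit. Unset Printing Implicit Defensive.
Import Order.TTheory GRing.Theory Num.Theory.
Local Open Scope classical_set_scope.
Local Open Scope ring_scope.

Definition enorm {R : realType} {n : nat} (v : 'cV[R]_n) : R :=
  Num.sqrt (\sum_(i < n) v i 0 ^+ 2).

Definition opnorm {R : realType} {n : nat} (A : 'M[R]_n) : R :=
  sup [set enorm (A *m v) | v in [set v : 'cV[R]_n | enorm v <= 1]].

Definition posdef {R : realType} {n : nat} (A : 'M[R]_n) : Prop :=
  A^T = A /\ forall v : 'cV[R]_n, v != 0 -> 0 < (v^T *m A *m v) 0 0.

(* R^n with its Borel sigma-algebra, generated by the coordinate maps. *)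
Definition Rvec (R : realType) (n : nat) : Type := 'cV[R]_n.
HB.instance Definition _ (R : realType) (n : nat) :=
  Choice.copy (Rvec R n) 'cV[R]_n.
HB.instance Definition _ (R : realType) (n : nat) :=
  isPointed.Build (Rvec R n) (0 : 'cV[R]_n).

Definition coord_gen (R : realType) (n : nat) : set (set (Rvec R n)) :=
  [set B | exists (i : 'I_n) (A : set R),
     measurable A /\ B = (fun v : 'cV[R]_n => v i 0) @^-1` A].

HB.instance Definition _ (R : realType) (n : nat) :=
  @isMeasurable.Build (sigma_display (@coord_gen R n)) (Rvec R n)
  <<s @coord_gen R n >> (@sigma_algebra0 _ setT (@coord_gen R n))
  (@sigma_algebraC _ (@coord_gen R n))
  (@sigma_algebra_bigcup _ setT (@coord_gen R n)).

Definition outerP {d} {T : measurableType d} {R : realType}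
  (P : probability T R) (A : set T) : \bar R :=
  ereal_inf [set P B | B in [set B | measurable B /\ A `<=` B]].

Definition cvg_in_prob {d} {T : measurableType d} {R : realType}
  (P : probability T R) (Z : nat -> T -> R) (c : R) : Prop :=
  forall delta : R, 0 < delta ->
    outerP P [set w | delta < `|Z n w - c|] @[n --> \oo] --> 0%E.

Definition indep2 {d d1 d2} {T : measurableType d} {T1 : measurableType d1}
  {T2 : measurableType d2} {R : realType} (P : probability T R)
  (U : T -> T1) (V : T -> T2) : Prop :=
  forall A B, measurable A -> measurable B ->
    P (U @^-1` A `&` V @^-1` B) = (P (U @^-1` A) * P (V @^-1` B))%E.

(* empirical mean (1/n) sum_{i=1}^n a_i, indices shifted to 0..n-1 *)
Definition emean {R : realType} (n : nat) (a : nat -> R) : R :=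
  n%:R^-1 * \sum_(i < n) a i.

(* residual  [Q(x)]^{-1} (y - f(x)) ; with (f,Q) = (fstar,Qstar) this is eps^i,
   with (f,Q) = (\hat f_n, \hat Q_n) this is \hat eps^i_n *)
Definition resid {R : realType} {dx dy : nat}
  (f : 'cV[R]_dx -> 'cV[R]_dy) (Q : 'cV[R]_dx -> 'M[R]_dy)
  (xi : 'cV[R]_dx) (yi : 'cV[R]_dy) : 'cV[R]_dy :=
  invmx (Q xi) *m (yi - f xi).

Definition dev {R : realType} {dx dy : nat}
  (fh : 'cV[R]_dx -> 'cV[R]_dy) (Qh : 'cV[R]_dx -> 'M[R]_dy)
  (fs : 'cV[R]_dx -> 'cV[R]_dy) (Qs : 'cV[R]_dx -> 'M[R]_dy)
  (x xi : 'cV[R]_dx) (yi : 'cV[R]_dy) : 'cV[R]_dy :=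
  (fh x + Qh x *m resid fh Qh xi yi) - (fs x + Qs x *m resid fs Qs xi yi).

From HB Require Import structures.
From mathcomp Require Import all_boot all_order all_algebra.
From mathcomp Require Import all_classical all_reals all_analysis.
From mathcomp Require Import ring lra.
Import Order.TTheory GRing.Theory Num.Theory.
Local Open Scope classical_set_scope.
Local Open Scope ring_scope.

Set Implicit Arguments. Unset Strict Implicit. Unset Printing Implicit Defensive.

(* Writing [r_i = y_i - f^*(x_i) = Q^*(x_i) eps_i], the deviation term splits exactly as
     [(fhat(x) - f^*(x)) + (Qhat(x) - Q^*(x)) Qhat(x_i)^-1 r_i
      + Q^*(x) (Qhat(x_i)^-1 - Q^*(x_i)^-1) r_i - Qhat(x) Qhat(x_i)^-1 (fhat(x_i) - f^*(x_i))].
   Taking norms and averaging over i with Cauchy-Schwarz, the mean of the [|eps~_i(x)|]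
   is dominated by a polynomial in the errors at x and the root-mean-square errors of (iii),
   which tend to 0 in probability, and in the empirical moments of (i) and (ii), which are
   bounded in probability; every monomial has a vanishing factor, so the mean tends to 0. *)

Section EuclideanNorm.
Variable R : realType.

Lemma CauchySchwarz_sum n (a b : 'I_n -> R) :
  (\sum_i a i * b i) ^+ 2 <= (\sum_i a i ^+ 2) * (\sum_i b i ^+ 2).
Proof.
set A := \sum_i a i ^+ 2; set B := \sum_i b i ^+ 2; set C := \sum_i a i * b i.
have A_ge0 : 0 <= A by apply: sumr_ge0 => i _; exact: sqr_ge0.
have quad_ge0 t : 0 <= t ^+ 2 * A - 2 * t * C + B.
  have -> : t ^+ 2 * A - 2 * t * C + B = \sum_i (a i * t - b i) ^+ 2.
    rewrite /A /B /C !mulr_sumr -sumrB -big_split /=.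
    by apply: eq_bigr => i _; ring.
  by apply: sumr_ge0 => i _; exact: sqr_ge0.
have [A0 | A_neq0] := eqVneq A 0.
  have a0 i : a i = 0.
    apply/eqP; rewrite -sqrf_eq0; apply/eqP.
    exact: (psumr_eq0P (fun i _ => sqr_ge0 (a i)) A0).
  by rewrite /C big1 ?expr0n ?A0 ?mul0r // => i _; rewrite a0 mul0r.
have A_gt0 : 0 < A by rewrite lt_def A_neq0.
(* the discriminant condition, read off at the vertex [t = C / A] *)
have := quad_ge0 (C / A).
have -> : (C / A) ^+ 2 * A - 2 * (C / A) * C + B = B - C ^+ 2 / A.
  by field; rewrite A_neq0.
by rewrite subr_ge0 ler_pdivrMr // mulrC.
Qed.

Lemma enorm_ge0 n (v : 'cV[R]_n) : 0 <= enorm v.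
Proof. exact: sqrtr_ge0. Qed.

Lemma sqr_enorm n (v : 'cV[R]_n) : enorm v ^+ 2 = \sum_i v i 0 ^+ 2.
Proof. by rewrite sqr_sqrtr //; apply: sumr_ge0 => i _; exact: sqr_ge0. Qed.

Lemma enorm0 n : enorm (0 : 'cV[R]_n) = 0.
Proof. by rewrite /enorm big1 ?sqrtr0 // => i _; rewrite mxE expr0n. Qed.

Lemma enorm0_eq0 n (v : 'cV[R]_n) : enorm v = 0 -> v = 0.
Proof.
move=> v0; have sum0 : \sum_i v i 0 ^+ 2 = 0 by rewrite -sqr_enorm v0 expr0n.
apply/matrixP => i j; rewrite ord1 mxE; apply/eqP; rewrite -sqrf_eq0; apply/eqP.
exact: (psumr_eq0P (fun i _ => sqr_ge0 (v i 0)) sum0).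
Qed.

Lemma enormN n (v : 'cV[R]_n) : enorm (- v) = enorm v.
Proof. by rewrite /enorm; congr Num.sqrt; apply: eq_bigr => i _; rewrite mxE sqrrN. Qed.

Lemma enormZ n (a : R) (v : 'cV[R]_n) : enorm (a *: v) = `|a| * enorm v.
Proof.
rewrite /enorm -sqrtr_sqr -sqrtrM ?sqr_ge0 // mulr_sumr; congr Num.sqrt.
by apply: eq_bigr => i _; rewrite mxE exprMn.
Qed.

Lemma ler_dot_enorm n (u v : 'cV[R]_n) : \sum_i u i 0 * v i 0 <= enorm u * enorm v.
Proof.
apply: le_trans (ler_norm _) _.
rewrite -sqrtr_sqr /enorm -sqrtrM; last by apply: sumr_ge0 => i _; exact: sqr_ge0.
by rewrite ler_sqrt ?CauchySchwarz_sum // mulr_ge0 // sumr_ge0 // => i _; exact: sqr_ge0.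
Qed.

Lemma ler_enormD n (u v : 'cV[R]_n) : enorm (u + v) <= enorm u + enorm v.
Proof.
rewrite -(ler_pXn2r (n := 2)) ?nnegrE ?addr_ge0 ?enorm_ge0 //.
have -> : enorm (u + v) ^+ 2 = enorm u ^+ 2 + 2 * (\sum_i u i 0 * v i 0) + enorm v ^+ 2.
  rewrite !sqr_enorm mulr_sumr -!big_split /=; apply: eq_bigr => i _.
  by rewrite !mxE; ring.
have -> : (enorm u + enorm v) ^+ 2 = enorm u ^+ 2 + 2 * (enorm u * enorm v) + enorm v ^+ 2.
  by ring.
by rewrite lerD2r lerD2l ler_pM2l ?ler_dot_enorm.
Qed.

Lemma ler_enormB n (u v : 'cV[R]_n) : enorm (u - v) <= enorm u + enorm v.
Proof. by rewrite -(enormN v) ler_enormD. Qed.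

Definition frobenius n (M : 'M[R]_n) : R := Num.sqrt (\sum_i \sum_j M i j ^+ 2).

Lemma enorm_mulmx_frobenius n (M : 'M[R]_n) v : enorm (M *m v) <= frobenius M * enorm v.
Proof.
rewrite -(ler_pXn2r (n := 2)) ?nnegrE ?mulr_ge0 ?enorm_ge0 ?sqrtr_ge0 // exprMn.
rewrite !sqr_enorm sqr_sqrtr; last by do 2![apply: sumr_ge0 => ? _]; exact: sqr_ge0.
rewrite mulr_suml; apply: ler_sum => i _.
by rewrite mxE; exact: (CauchySchwarz_sum (M i) (fun j => v j 0)).
Qed.

Lemma opnorm_ub n (M : 'M[R]_n) v : enorm v <= 1 -> enorm (M *m v) <= opnorm M.
Proof.
move=> v_le1; apply: ub_le_sup; last by exists v.
exists (frobenius M) => _ [u /= u_le1 <-].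
apply: le_trans (enorm_mulmx_frobenius M u) _.
by rewrite -[leRHS]mulr1 ler_wpM2l ?sqrtr_ge0.
Qed.

Lemma opnorm_ge0 n (M : 'M[R]_n) : 0 <= opnorm M.
Proof. by apply: le_trans (opnorm_ub M (v := 0) _); rewrite ?mulmx0 enorm0. Qed.

Lemma enorm_mulmx_le n (M : 'M[R]_n) v : enorm (M *m v) <= opnorm M * enorm v.
Proof.
have [v0 | v_neq0] := eqVneq (enorm v) 0.
  by rewrite (enorm0_eq0 v0) mulmx0 enorm0 mulr0.
have v_gt0 : 0 < enorm v by rewrite lt_def v_neq0 enorm_ge0.
have := opnorm_ub M (v := (enorm v)^-1 *: v).
rewrite -scalemxAr !enormZ ger0_norm ?invr_ge0 ?enorm_ge0 // mulVf // lexx.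
by rewrite ler_pdivrMl // mulrC => /(_ isT).
Qed.

Lemma ler_opnormD n (M N : 'M[R]_n) : opnorm (M + N) <= opnorm M + opnorm N.
Proof.
apply: ge_sup; first by exists (enorm ((M + N) *m 0)), 0; rewrite //= enorm0.
move=> _ [v /= v_le1 <-]; rewrite mulmxDl.
apply: le_trans (ler_enormD _ _) _.
by apply: lerD; apply: le_trans (enorm_mulmx_le _ _) _; rewrite ler_piMr ?opnorm_ge0.
Qed.

Lemma opnorm_le_subD n (M N : 'M[R]_n) : opnorm M <= opnorm (M - N) + opnorm N.
Proof. by rewrite -{1}(subrK N M) ler_opnormD. Qed.

Lemma posdef_unitmx n (A : 'M[R]_n) : posdef A -> A \in unitmx.
Proof.
case=> A_sym A_pos; rewrite -row_free_unit -kermx_eq0; apply/eqP/row_matrixP => i.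
rewrite row0; set w := row i (kermx A).
have Aw : A *m w^T = 0.
  by rewrite -{1}A_sym -trmx_mul /w -row_mul mulmx_ker row0 trmx0.
apply/eqP; apply: contraT => w_neq0.
have wT_neq0 : w^T != 0 by apply: contra w_neq0 => /eqP wT0; rewrite -(trmxK w) wT0 trmx0.
by have := A_pos _ wT_neq0; rewrite -mulmxA Aw mulmx0 mxE ltxx.
Qed.

End EuclideanNorm.

Section Deviation.
Variables (R : realType) (dx dy : nat).
Variables (fh fs : 'cV[R]_dx -> 'cV[R]_dy) (Qh Qs : 'cV[R]_dx -> 'M[R]_dy).
Variables (x xi : 'cV[R]_dx) (yi : 'cV[R]_dy).

Lemma devE (r := yi - fs xi) :
  dev fh Qh fs Qs x xi yi =
    (fh x - fs x) + (Qh x - Qs x) *m (invmx (Qh xi) *m r)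
    + Qs x *m ((invmx (Qh xi) - invmx (Qs xi)) *m r)
    - Qh x *m (invmx (Qh xi) *m (fh xi - fs xi)).
Proof.
rewrite /dev /resid -/r.
have -> : yi - fh xi = r - (fh xi - fs xi) by rewrite opprB addrA subrK.
set d := fh xi - fs xi; clearbody r d.
rewrite [in RHS]mulmxBl [(_ - _) *m r]mulmxBl !mulmxBr.
by rewrite [fh x - fs x + _]addrA subrKA opprD !addrA (ACl (1*4*2*5*3)%AC).
Qed.

Lemma enorm_dev_le :
  let b := opnorm (Qh x - Qs x) in
  let q := opnorm (Qs x) in
  let m := opnorm (invmx (Qh xi) - invmx (Qs xi)) in
  let e := enorm (resid fs Qs xi yi) in
  Qs xi \in unitmx ->
  enorm (dev fh Qh fs Qs x xi yi) <=
    enorm (fh x - fs x) + (b + q) * (m * opnorm (Qs xi) * e) + b * e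
    + (b + q) * ((m + opnorm (invmx (Qs xi))) * enorm (fh xi - fs xi)).
Proof.
move=> b q m e Qs_unit; rewrite devE.
set A := invmx (Qh xi); set B := invmx (Qs xi); set r := yi - fs xi.
set s := opnorm (Qs xi); set d := enorm (fh xi - fs xi).
have [b0 q0 m0 e0] : [/\ 0 <= b, 0 <= q, 0 <= m & 0 <= e].
  by split; rewrite ?opnorm_ge0 ?enorm_ge0.
have r_le : enorm r <= s * e.
  by rewrite -{1}(mulKVmx Qs_unit r); exact: enorm_mulmx_le.
have Ar_le : enorm (A *m r) <= m * s * e + e.
  rewrite -(subrK (B *m r) (A *m r)) -mulmxBl.
  apply: le_trans (ler_enormD _ _) _; rewrite lerD2r -mulrA.
  by apply: le_trans (enorm_mulmx_le _ _) _; rewrite ler_wpM2l.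
have Qx_term : enorm ((Qh x - Qs x) *m (A *m r)) <= b * (m * s * e + e).
  by apply: le_trans (enorm_mulmx_le _ _) _; rewrite ler_wpM2l.
have Qinv_term : enorm (Qs x *m ((A - B) *m r)) <= q * (m * s * e).
  apply: le_trans (enorm_mulmx_le _ _) _; rewrite -mulrA ler_wpM2l //.
  by apply: le_trans (enorm_mulmx_le _ _) _; rewrite ler_wpM2l.
have f_term : enorm (Qh x *m (A *m (fh xi - fs xi))) <= (b + q) * ((m + opnorm B) * d).
  apply: le_trans (enorm_mulmx_le _ _) _; apply: ler_pM; rewrite ?opnorm_ge0 ?enorm_ge0 //.
    exact: opnorm_le_subD.
  apply: le_trans (enorm_mulmx_le _ _) _.
  by rewrite ler_wpM2r ?enorm_ge0 ?opnorm_le_subD.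
apply: le_trans (ler_enormB _ _) _; rewrite -addrA lerD //.
apply: le_trans (ler_enormD _ _) _; rewrite -addrA lerD2l.
by apply: le_trans (ler_enormD _ _) _; nra.
Qed.

End Deviation.

Section ConvergenceInProbability.
Variables (d : measure_display) (T : measurableType d) (R : realType).
Variable P : probability T R.
Implicit Types (A B N : set T) (Z W U : nat -> T -> R).

Lemma outerP_le A B : measurable B -> A `<=` B -> (outerP P A <= P B)%E.
Proof. by move=> mB AB; apply: ereal_inf_lbound; exists B. Qed.

Lemma le_outerP A B : A `<=` B -> (outerP P A <= outerP P B)%E.
Proof.
move=> AB; apply/ereal_infP => _ [C [mC BC] <-].
exact: outerP_le mC (subset_trans AB BC).
Qed.

Lemma outerP_ge0 A : (0 <= outerP P A)%E.
Proof. by apply/ereal_infP => _ [B _ <-]. Qed.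

Lemma outerP_fin_num A : outerP P A \is a fin_num.
Proof.
rewrite ge0_fin_numE ?outerP_ge0 //.
by apply: le_lt_trans (outerP_le measurableT (subsetT A)) _; rewrite probability_setT ltry.
Qed.

Lemma outerP_negligible N : P.-negligible N -> outerP P N = 0%E.
Proof.
case=> B [mB PB NB]; apply/eqP; rewrite eq_le outerP_ge0 andbT -PB.
exact: outerP_le.
Qed.

Lemma outerP_setU_lt A B (e1 e2 : R) :
  (outerP P A < e1%:E)%E -> (outerP P B < e2%:E)%E ->
  (outerP P (A `|` B) < (e1 + e2)%:E)%E.
Proof.
case/ereal_inf_lt => _ [A' [mA' AA'] <-] PA'.
case/ereal_inf_lt => _ [B' [mB' BB'] <-] PB'.
apply: le_lt_trans (outerP_le (measurableU _ _ mA' mB') (setUSS AA' BB')) _.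
by apply: le_lt_trans (measureU2 _ mA' mB') _; rewrite EFinD lteD.
Qed.

Lemma cvg_in_probP Z c : cvg_in_prob P Z c <->
  forall del e : R, 0 < del -> 0 < e ->
    \forall n \near \oo, (outerP P [set w | (del < `|Z n w - c|)%R] < e%:E)%E.
Proof.
split=> [cvgZ del e del0 e0 | cvgZ del del0].
  have /fine_cvgP [_ /cvgrPdist_lt /(_ e e0)] := cvgZ del del0.
  apply: filterS => n; rewrite sub0r normrN /= => small_n.
  by rewrite -(fineK (outerP_fin_num _)) lte_fin (le_lt_trans (ler_norm _)).
apply/fine_cvgP; split; first exact: nearW (fun=> outerP_fin_num _).
apply/cvgrPdist_lt => e e0; apply: filterS (cvgZ _ _ del0 e0) => n small_n.
rewrite sub0r normrN /= ger0_norm ?fine_ge0 ?outerP_ge0 //.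
by rewrite -lte_fin fineK ?outerP_fin_num.
Qed.

Lemma cvg_in_prob0P Z : cvg_in_prob P Z 0 <->
  forall del e : R, 0 < del -> 0 < e ->
    \forall n \near \oo, (outerP P [set w | (del < `|Z n w|)%R] < e%:E)%E.
Proof.
have levelE n (del : R) : [set w | del < `|Z n w - 0|] = [set w | del < `|Z n w|].
  by apply/seteqP; split => w; rewrite /= subr0.
apply: (iff_trans (cvg_in_probP Z 0)).
by split=> cvgZ del e del0 e0; apply: filterS (cvgZ del e del0 e0) => n; rewrite levelE.
Qed.

Definition bounded_in_prob Z := forall e : R, 0 < e -> exists2 K : R, 0 <= K &
  \forall n \near \oo, (outerP P [set w | (K < `|Z n w|)%R] < e%:E)%E.

Lemma near_outerP_lt_split Z W U (a b c e1 e2 : R) :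
  (forall n w, `|Z n w| <= a -> `|W n w| <= b -> `|U n w| <= c) ->
  (\forall n \near \oo, (outerP P [set w | (a < `|Z n w|)%R] < e1%:E)%E) ->
  (\forall n \near \oo, (outerP P [set w | (b < `|W n w|)%R] < e2%:E)%E) ->
  \forall n \near \oo, (outerP P [set w | (c < `|U n w|)%R] < (e1 + e2)%:E)%E.
Proof.
move=> ZWU; apply: filterS2 => n PZ PW.
apply: le_lt_trans (outerP_setU_lt PZ PW); apply: le_outerP => w /= cU.
have [Za|] := lerP `|Z n w| a; last by left.
have [Wb|] := lerP `|W n w| b; last by right.
by move: cU; rewrite ltNge ZWU.
Qed.

Lemma near_outerP_lt_mono Z U (a c e : R) :
  (forall n w, `|Z n w| <= a -> `|U n w| <= c) ->
  (\forall n \near \oo, (outerP P [set w | (a < `|Z n w|)%R] < e%:E)%E) ->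
  \forall n \near \oo, (outerP P [set w | (c < `|U n w|)%R] < e%:E)%E.
Proof.
move=> ZU; apply: filterS => n; apply: le_lt_trans; apply: le_outerP => w /=.
by rewrite !ltNge; apply: contra; exact: ZU.
Qed.

Lemma bounded_in_prob_cst (c : R) : bounded_in_prob (fun _ _ => c).
Proof.
move=> e e0; exists `|c| => //; apply: nearW => n.
rewrite (_ : [set w | _] = set0); last by apply/seteqP; split => w //=; rewrite ltxx.
by rewrite outerP_negligible ?lte_fin //; exact: negligible_set0.
Qed.

Lemma cvg_in_prob_bounded Z c : cvg_in_prob P Z c -> bounded_in_prob Z.
Proof.
move/cvg_in_probP => cvgZ e e0; exists (`|c| + 1); first by rewrite addr_ge0.
apply: near_outerP_lt_mono (cvgZ 1 e ltr01 e0) => n w Zc.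
by have := ler_normD (Z n w - c) c; rewrite subrK; lra.
Qed.

Lemma bounded_in_probD Z W : bounded_in_prob Z -> bounded_in_prob W ->
  bounded_in_prob (fun n w => Z n w + W n w).
Proof.
move=> bZ bW e e0; have e2 : 0 < e / 2 by rewrite divr_gt0.
have [K1 K1_ge0 PZ] := bZ _ e2; have [K2 K2_ge0 PW] := bW _ e2.
exists (K1 + K2); first exact: addr_ge0.
rewrite [e]splitr; apply: near_outerP_lt_split PZ PW => n w Z_le W_le.
by apply: le_trans (ler_normD _ _) _; exact: lerD.
Qed.

Lemma bounded_in_probM Z W : bounded_in_prob Z -> bounded_in_prob W ->
  bounded_in_prob (fun n w => Z n w * W n w).
Proof.
move=> bZ bW e e0; have e2 : 0 < e / 2 by rewrite divr_gt0.
have [K1 K1_ge0 PZ] := bZ _ e2; have [K2 K2_ge0 PW] := bW _ e2.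
exists (K1 * K2); first exact: mulr_ge0.
rewrite [e]splitr; apply: near_outerP_lt_split PZ PW => n w Z_le W_le.
by rewrite normrM ler_pM.
Qed.

Lemma cvg_in_prob0D Z W : cvg_in_prob P Z 0 -> cvg_in_prob P W 0 ->
  cvg_in_prob P (fun n w => Z n w + W n w) 0.
Proof.
move=> /cvg_in_prob0P cvgZ /cvg_in_prob0P cvgW; apply/cvg_in_prob0P => del e del0 e0.
have [del2 e2] : 0 < del / 2 /\ 0 < e / 2 by split; rewrite divr_gt0.
rewrite [del]splitr [e]splitr.
apply: near_outerP_lt_split (cvgZ _ _ del2 e2) (cvgW _ _ del2 e2) => n w Z_le W_le.
by apply: le_trans (ler_normD _ _) _; exact: lerD.
Qed.

Lemma cvg_in_prob0M Z W : cvg_in_prob P Z 0 -> bounded_in_prob W ->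
  cvg_in_prob P (fun n w => Z n w * W n w) 0.
Proof.
move=> /cvg_in_prob0P cvgZ bW; apply/cvg_in_prob0P => del e del0 e0.
have e2 : 0 < e / 2 by rewrite divr_gt0.
have [K K_ge0 PW] := bW _ e2.
have delK : 0 < del / (K + 1) by rewrite divr_gt0 // ltr_wpDl.
rewrite [e]splitr; apply: near_outerP_lt_split (cvgZ _ _ delK e2) PW => n w Z_le W_le.
rewrite normrM -(divfK (lt0r_neq0 (ltr_wpDl K_ge0 ltr01)) del).
by rewrite ler_pM // ?normr_ge0 // (le_trans W_le) // lerDl.
Qed.

Lemma cvg_in_prob0_sqrt Z : cvg_in_prob P Z 0 ->
  cvg_in_prob P (fun n w => Num.sqrt (Z n w)) 0.
Proof.
move=> /cvg_in_prob0P cvgZ; apply/cvg_in_prob0P => del e del0 e0.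
apply: near_outerP_lt_mono (cvgZ _ _ (exprn_gt0 2 del0) e0) => n w Z_le.
rewrite ger0_norm ?sqrtr_ge0 // -(ger0_norm (ltW del0)) -sqrtr_sqr ler_sqrt ?sqr_ge0 //.
exact: le_trans (ler_norm _) Z_le.
Qed.

Lemma cvg_in_prob0_le N U Z : P.-negligible N ->
  (forall n w, ~ N w -> `|U n w| <= `|Z n w|) ->
  cvg_in_prob P Z 0 -> cvg_in_prob P U 0.
Proof.
move=> negN UZ /cvg_in_prob0P cvgZ; apply/cvg_in_prob0P => del e del0 e0.
have e2 : 0 < e / 2 by rewrite divr_gt0.
apply: filterS (cvgZ _ _ del0 e2) => n PZ; rewrite [e]splitr.
have PN : (outerP P N < (e / 2)%:E)%E by rewrite outerP_negligible ?lte_fin.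
apply: le_lt_trans (outerP_setU_lt PZ PN); apply: le_outerP => w /= delU.
have [Nw | nNw] := pselect (N w); [by right | left].
exact: lt_le_trans delU (UZ n w nNw).
Qed.

End ConvergenceInProbability.

Section EmpiricalMean.
Variable R : realType.
Implicit Types (u v : nat -> R).

Definition rms n u : R := Num.sqrt (emean n (fun i => u i ^+ 2)).

Lemma ler_emean n u v : (forall i, u i <= v i) -> emean n u <= emean n v.
Proof. by move=> uv; rewrite ler_wpM2l ?invr_ge0 // ler_sum. Qed.

Lemma emean_ge0 n u : (forall i, 0 <= u i) -> 0 <= emean n u.
Proof. by move=> u_ge0; rewrite mulr_ge0 ?invr_ge0 ?sumr_ge0. Qed.

Lemma emeanD n u v : emean n (fun i => u i + v i) = emean n u + emean n v.
Proof. by rewrite /emean big_split mulrDr. Qed.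

Lemma emeanZ n (c : R) u : emean n (fun i => c * u i) = c * emean n u.
Proof. by rewrite /emean -mulr_sumr mulrCA. Qed.

Lemma emean_cst_le n (c : R) : 0 <= c -> emean n (fun=> c) <= c.
Proof.
move=> c0; rewrite /emean sumr_const card_ord.
case: n => [|n]; first by rewrite mulr0n mulr0.
by rewrite -(mulr_natr c) mulrC mulfK // pnatr_eq0.
Qed.

Lemma emean_mul_le_rms n u v : emean n (fun i => u i * v i) <= rms n u * rms n v.
Proof.
have msq_ge0 (w : nat -> R) : 0 <= emean n (fun i => w i ^+ 2).
  by apply: emean_ge0 => i; exact: sqr_ge0.
rewrite /rms -sqrtrM //; apply: le_trans (ler_norm _) _.
rewrite -sqrtr_sqr ler_sqrt; last exact: mulr_ge0.
rewrite /emean exprMn [leRHS]mulrACA -expr2 ler_wpM2l ?exprn_ge0 ?invr_ge0 //.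
exact: CauchySchwarz_sum.
Qed.

Lemma sqrtr_le1D (y : R) : 0 <= y -> Num.sqrt y <= 1 + y.
Proof. by move=> y0; rewrite -{2}(sqr_sqrtr y0); have := sqrtr_ge0 y; nra. Qed.

Lemma rms_le1D n u : rms n u <= 1 + emean n (fun i => u i ^+ 2).
Proof. by apply: sqrtr_le1D; apply: emean_ge0 => i; exact: sqr_ge0. Qed.

Lemma emean_le1D_pow4 n u : emean n u <= 1 + emean n (fun i => u i ^+ 4).
Proof.
apply: le_trans (_ : emean n (fun i => 1 + u i ^+ 4) <= _).
  apply: ler_emean => i.
  (* [1 + u^4 - u = (u^2 - 1/2)^2 + (u - 1/2)^2 + 1/2] *)
  by have := sqr_ge0 (u i ^+ 2 - 2^-1); have := sqr_ge0 (u i - 2^-1); nra.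
by rewrite emeanD lerD2r emean_cst_le.
Qed.

Lemma emean_sqr_mul_le n u v :
  emean n (fun i => (u i * v i) ^+ 2) <=
  (emean n (fun i => u i ^+ 4) + emean n (fun i => v i ^+ 4)) / 2.
Proof.
rewrite -emeanD mulrC -emeanZ; apply: ler_emean => i.
by have := sqr_ge0 (u i ^+ 2 - v i ^+ 2); nra.
Qed.

End EmpiricalMean.

Section DeviationAtAPoint.
Variables (R : realType) (dx dy : nat) (d : measure_display) (Omega : measurableType d).
Variable P : probability Omega R.
Variables (fstar : 'cV[R]_dx -> 'cV[R]_dy) (Qstar : 'cV[R]_dx -> 'M[R]_dy).
Variables (xs : nat -> Omega -> 'cV[R]_dx) (ys : nat -> Omega -> 'cV[R]_dy).
Variables (fhat : nat -> Omega -> 'cV[R]_dx -> 'cV[R]_dy).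
Variables (Qhat : nat -> Omega -> 'cV[R]_dx -> 'M[R]_dy).
Variables (N : set Omega) (x : 'cV[R]_dx).
Hypothesis N_negligible : P.-negligible N.
Hypothesis Qstar_unit : forall w i, ~ N w -> Qstar (xs i w) \in unitmx.
Hypothesis Q4_bounded :
  bounded_in_prob P (fun n w => emean n (fun i => opnorm (Qstar (xs i w)) ^+ 4)).
Hypothesis Qinv2_bounded :
  bounded_in_prob P (fun n w => emean n (fun i => opnorm (invmx (Qstar (xs i w))) ^+ 2)).
Hypothesis eps4_bounded : bounded_in_prob P
  (fun n w => emean n (fun i => enorm (resid fstar Qstar (xs i w) (ys i w)) ^+ 4)).
Hypothesis fhat_x : cvg_in_prob P (fun n w => enorm (fhat n w x - fstar x)) 0.
Hypothesis Qhat_x : cvg_in_prob P (fun n w => opnorm (Qhat n w x - Qstar x)) 0.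
Hypothesis fhat_L2 : cvg_in_prob P
  (fun n w => emean n (fun i => enorm (fhat n w (xs i w) - fstar (xs i w)) ^+ 2)) 0.
Hypothesis Qhatinv_L2 : cvg_in_prob P (fun n w => emean n (fun i =>
  opnorm (invmx (Qhat n w (xs i w)) - invmx (Qstar (xs i w))) ^+ 2)) 0.

Let a n w := enorm (fhat n w x - fstar x).
Let b n w := opnorm (Qhat n w x - Qstar x).
Let q := opnorm (Qstar x).
Let m n w i := opnorm (invmx (Qhat n w (xs i w)) - invmx (Qstar (xs i w))).
Let s w i := opnorm (Qstar (xs i w)).
Let e w i := enorm (resid fstar Qstar (xs i w) (ys i w)).
Let t w i := opnorm (invmx (Qstar (xs i w))).
Let df n w i := enorm (fhat n w (xs i w) - fstar (xs i w)).

Let G n w := 1 + (emean n (fun i => s w i ^+ 4) + emean n (fun i => e w i ^+ 4)) / 2.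

Let F n w := a n w + rms n (m n w) * G n w * (b n w + q)
  + b n w * (1 + emean n (fun i => e w i ^+ 4))
  + rms n (df n w) * (rms n (m n w) + (1 + emean n (fun i => t w i ^+ 2))) * (b n w + q).

Lemma emean_dev_le n w : ~ N w ->
  emean n (fun i => enorm (dev (fhat n w) (Qhat n w) fstar Qstar x (xs i w) (ys i w)))
  <= F n w.
Proof.
move=> Nw.
have [a0 b0 q0] : [/\ 0 <= a n w, 0 <= b n w & 0 <= q].
  by split; rewrite ?enorm_ge0 ?opnorm_ge0.
have mse_le : emean n (fun i => m n w i * s w i * e w i) <= rms n (m n w) * G n w.
  under eq_fun do rewrite -mulrA.
  apply: le_trans (emean_mul_le_rms _ _ _) _; rewrite ler_wpM2l ?sqrtr_ge0 //.
  apply: le_trans (rms_le1D _ _) _; rewrite lerD2l.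
  exact: emean_sqr_mul_le.
have e_le := emean_le1D_pow4 n (e w).
have df_le : emean n (fun i => m n w i * df n w i + t w i * df n w i)
    <= (rms n (m n w) + (1 + emean n (fun i => t w i ^+ 2))) * rms n (df n w).
  rewrite emeanD mulrDl; apply: lerD; first exact: emean_mul_le_rms.
  apply: le_trans (emean_mul_le_rms _ _ _) _.
  by rewrite ler_wpM2r ?sqrtr_ge0 ?rms_le1D.
apply: le_trans (_ : emean n (fun i => a n w + (b n w + q) * (m n w i * s w i * e w i)
    + b n w * e w i + (b n w + q) * (m n w i * df n w i + t w i * df n w i)) <= _).
  by apply: ler_emean => i; rewrite -mulrDl; exact: enorm_dev_le (Qstar_unit i Nw).
rewrite !emeanD !emeanZ /F [X in _ <= _ + X]mulrC [X in _ <= _ + (_ * X)]mulrC.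
rewrite [X in _ <= _ + X + _ + _]mulrC.
have bq0 : 0 <= b n w + q by rewrite addr_ge0.
rewrite !lerD ?ler_wpM2l ?emean_cst_le //.
Qed.

Lemma cvg_in_prob0_emean_dev : cvg_in_prob P (fun n w =>
  emean n (fun i => enorm (dev (fhat n w) (Qhat n w) fstar Qstar x (xs i w) (ys i w)))) 0.
Proof.
apply: (cvg_in_prob0_le N_negligible (Z := F)) => [n w Nw|].
  rewrite ger0_norm; last by apply: emean_ge0 => i; exact: enorm_ge0.
  exact: le_trans (emean_dev_le n Nw) (ler_norm _).
have rms_m := cvg_in_prob0_sqrt Qhatinv_L2.
have rms_df := cvg_in_prob0_sqrt fhat_L2.
have one := bounded_in_prob_cst P 1.
have bq : bounded_in_prob P (fun n w => b n w + q).
  exact: bounded_in_probD (cvg_in_prob_bounded Qhat_x) (bounded_in_prob_cst P q).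
have bG : bounded_in_prob P G.
  apply: bounded_in_probD one (bounded_in_probM _ (bounded_in_prob_cst P 2^-1)).
  exact: bounded_in_probD Q4_bounded eps4_bounded.
apply: cvg_in_prob0D; last apply: cvg_in_prob0M (cvg_in_prob0M rms_df _) bq.
  apply: cvg_in_prob0D; last exact: cvg_in_prob0M Qhat_x (bounded_in_probD one eps4_bounded).
  exact: cvg_in_prob0D fhat_x (cvg_in_prob0M (cvg_in_prob0M rms_m bG) bq).
exact: bounded_in_probD (cvg_in_prob_bounded rms_m) (bounded_in_probD one Qinv2_bounded).
Qed.

End DeviationAtAPoint.

Lemma negligible_bigcup_preimage d (Omega : measurableType d) (R : realType)
    (P : probability Omega R) d1 d2 (T1 : measurableType d1) (T2 : measurableType d2)
    (U : Omega -> T1) (V : Omega -> T2) (us : nat -> Omega -> T1) (vs : nat -> Omega -> T2)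
    (N0 : set T2) :
  (forall i, measurable_fun setT (fun w => (us i w, vs i w)) /\
     forall A, measurable A ->
       P ((fun w => (us i w, vs i w)) @^-1` A) = P ((fun w => (U w, V w)) @^-1` A)) ->
  measurable N0 -> P (V @^-1` N0) = 0%E -> P.-negligible (\bigcup_i vs i @^-1` N0).
Proof.
move=> same_law mN0 PN0; apply: negligible_bigcup => i.
have preimageE (f : Omega -> T1) (g : Omega -> T2) :
    g @^-1` N0 = (fun w => (f w, g w)) @^-1` (setT `*` N0).
  by apply/seteqP; split => w //= [].
have mvs : measurable_fun setT (vs i).
  exact: measurableT_comp measurable_snd (same_law i).1.
exists (vs i @^-1` N0); split => //; first by rewrite -[_ @^-1` _]setTI; exact: mvs.
rewrite (preimageE (us i)).
apply: eq_trans ((same_law i).2 _ (measurableX measurableT mN0)) _.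
by rewrite -preimageE.
Qed.

Theorem theorem4 (R : realType) (dx dy : nat)
  (dO : measure_display) (Omega : measurableType dO) (P : probability Omega R)
  (fstar : 'cV[R]_dx -> 'cV[R]_dy) (Qstar : 'cV[R]_dx -> 'M[R]_dy)
  (* the model  Y = f^*(X) + Q^*(X) eps *)
  (X : Omega -> Rvec R dx) (eps : Omega -> Rvec R dy) (Y : Omega -> Rvec R dy)
  (mX : measurable_fun setT X) (meps : measurable_fun setT eps)
  (mY : measurable_fun setT Y)
  (HY : forall w, Y w = fstar (X w) + Qstar (X w) *m eps w)
  (Hindep : indep2 P X eps)
  (Hmean : forall j : 'I_dy,
     P.-integrable setT (fun w => (eps w j 0)%:E) /\
     (\int[P]_w (eps w j 0)%:E = 0)%E)
  (HQpd : {ae pushforward P X, forall x, posdef (Qstar x)})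
  (* data: (y^i, x^i) are joint observations of (Y, X) *)
  (xs : nat -> Omega -> Rvec R dx) (ys : nat -> Omega -> Rvec R dy)
  (Hdata : forall i : nat,
     measurable_fun setT (fun w => (ys i w, xs i w)) /\
     forall A : set (Rvec R dy * Rvec R dx), measurable A ->
       P ((fun w => (ys i w, xs i w)) @^-1` A) = P ((fun w => (Y w, X w)) @^-1` A))
  (* estimators computed from D_n *)
  (fhat : nat -> Omega -> 'cV[R]_dx -> 'cV[R]_dy)
  (Qhat : nat -> Omega -> 'cV[R]_dx -> 'M[R]_dy)
  (Hest : forall (n : nat) (w w' : Omega),
     (forall i : nat, (i < n)%N -> xs i w = xs i w' /\ ys i w = ys i w') ->
     fhat n w = fhat n w' /\ Qhat n w = Qhat n w')
  (HQhatpd : {ae pushforward P X, forall x,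
     forall n : nat, {ae P, forall w, posdef (Qhat n w x)}})
  (* (i) *)
  (HEQ4 : (\int[P]_w ((opnorm (Qstar (X w))) ^+ 4)%:E < +oo)%E)
  (HQ4 : cvg_in_prob P
     (fun n w => emean n (fun i => (opnorm (Qstar (xs i w))) ^+ 4))
     (fine (\int[P]_w ((opnorm (Qstar (X w))) ^+ 4)%:E)))
  (HEQinv2 : (\int[P]_w ((opnorm (invmx (Qstar (X w)))) ^+ 2)%:E < +oo)%E)
  (HQinv2 : cvg_in_prob P
     (fun n w => emean n (fun i => (opnorm (invmx (Qstar (xs i w)))) ^+ 2))
     (fine (\int[P]_w ((opnorm (invmx (Qstar (X w)))) ^+ 2)%:E)))
  (* (ii) *)
  (HEeps4 : (\int[P]_w ((enorm (eps w : 'cV[R]_dy)) ^+ 4)%:E < +oo)%E)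
  (Heps4 : cvg_in_prob P
     (fun n w => emean n (fun i =>
        (enorm (resid fstar Qstar (xs i w) (ys i w))) ^+ 4))
     (fine (\int[P]_w ((enorm (eps w : 'cV[R]_dy)) ^+ 4)%:E)))
  (* (iii) *)
  (Hpt : {ae pushforward P X, forall x,
     cvg_in_prob P (fun n w => enorm (fhat n w x - fstar x)) 0 /\
     cvg_in_prob P (fun n w => opnorm (Qhat n w x - Qstar x)) 0})
  (Hf2 : cvg_in_prob P
     (fun n w => emean n (fun i => (enorm (fhat n w (xs i w) - fstar (xs i w))) ^+ 2))
     0)
  (HQ2 : cvg_in_prob P
     (fun n w => emean n (fun i =>
        (opnorm (invmx (Qhat n w (xs i w)) - invmx (Qstar (xs i w)))) ^+ 2))
     0) :
  {ae pushforward P X, forall x,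
     cvg_in_prob P
       (fun n w => emean n (fun i =>
          enorm (dev (fhat n w) (Qhat n w) fstar Qstar x (xs i w) (ys i w))))
       0}.
Proof.
case: HQpd => N0 [mN0 PN0 not_posdef_N0].
have negN := negligible_bigcup_preimage Hdata mN0 PN0.
have Qstar_unit w i : ~ (\bigcup_j xs j @^-1` N0) w -> Qstar (xs i w) \in unitmx.
  move=> Nw; apply: posdef_unitmx; apply: contrapT => not_posdef.
  by apply: Nw; exists i => //; exact: not_posdef_N0.
case: Hpt => N1 [mN1 PN1 N1_bad]; exists N1; split => // x /= deviates.
apply: N1_bad => -[fhat_x Qhat_x]; apply: deviates.
exact: cvg_in_prob0_emean_dev negN Qstar_unit (cvg_in_prob_bounded HQ4)
  (cvg_in_prob_bounded HQinv2) (cvg_in_prob_bounded Heps4) fhat_x Qhat_x Hf2 HQ2.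
Qed.
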